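(* Let $M=(S,\mathrm{Act},P)$ be an MDP, $T\subseteq S$, $\mathrm{rew}\colon S\to\mathbb{R}_{\ge0}$. Let $(x,r)\in[0,\infty]^S\times\mathbb{N}_\infty^S$ satisfy: (1) $D^{\min,\mathrm{rew}}_x(r)\le r$; (2) $E^{\min}(x)\le x$; (3) for all $s\in S$, $x(s)<\infty$ implies $r(s)<\infty$ (inequalities pointwise). Then $\mathbb{E}^{\min}_s(\Diamond T)\le x(s)$ for all $s\in S$.
   Context: An MDP is a tuple $M=(S,\mathrm{Act},P)$ with $S$ finite, $\mathrm{Act}$ finite, $P\colon S\times\mathrm{Act}\times S\to[0,1]$ with $\sum_{s'}P(s,a,s')\in\{0,1\}$; $\mathrm{Act}(s)=\{a\mid\sum_{s'}P(s,a,s')=1\}$ is nonempty for all $s$; $\mathrm{Post}(s,a)=\{s'\mid P(s,a,s')>0\}$. A strategy is $\sigma\colon S\to\mathrm{Act}$ with $\sigma(s)\in\mathrm{Act}(s)$, inducing a Markov chain with transitions $P(s,\sigma(s),\cdot)$. For an infinite path $s_0s_1\ldots$, the accumulated reward is $\sum_{k=0}^{n-1}\mathrm{rew}(s_k)$ with $n=\min\{i\mid s_i\in T\}$ if $T$ is visited, and $\infty$ otherwise; $\mathbb{E}^\sigma_s(\Diamond T)$ is its expectation under $\sigma$ from $s$, and $\mathbb{E}^{\min}_s(\Diamond T)=\min_\sigma\mathbb{E}^\sigma_s(\Diamond T)$. $E^{\min}(x)(s)=0$ for $s\in T$ and $\mathrm{rew}(s)+\min_{a\in\mathrm{Act}(s)}\sum_{s'\in\mathrm{Post}(s,a)}P(s,a,s')x(s')$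 for $s\notin T$, with $p\cdot\infty=\infty$ for $p>0$, $a+\infty=\infty$. The $x$-decreasing actions of $s$ are $\mathrm{Act}^{\mathrm{rew}}_x(s)=\{a\in\mathrm{Act}(s)\mid x(s)\ge\mathrm{rew}(s)+\sum_{s'\in\mathrm{Post}(s,a)}P(s,a,s')x(s')\}$. $\mathbb{N}_\infty=\mathbb{N}\cup\{\infty\}$, $1+\infty=\infty$, minimum over the empty set is $\infty$. $D^{\min,\mathrm{rew}}_x(r)(s)=0$ for $s\in T$ and $1+\min_{a\in\mathrm{Act}^{\mathrm{rew}}_x(s)}\min_{s'\in\mathrm{Post}(s,a)}r(s')$ for $s\notin T$. *)

From mathcomp Require Import all_boot all_order all_algebra.
From mathcomp Require Import all_classical all_reals all_analysis.
Set Implicit Arguments. Unset Strict Implicit. Unset Printing Implicit Defensive.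
Import Order.TTheory GRing.Theory Num.Theory.
Local Open Scope ring_scope.

Section MDP.
Variables (R : realType) (S Act : finType).
Variable P : S -> Act -> S -> R.
Variable T : {set S}.
Variable rew : S -> R.

Definition mdp_wf : Prop :=
  (forall s a s', 0 <= P s a s' <= 1) /\
  (forall s a, \sum_(s' : S) P s a s' = 0 \/ \sum_(s' : S) P s a s' = 1).

Definition enabled (s : S) : pred Act := fun a => \sum_(s' : S) P s a s' == 1.

Definition post (s : S) (a : Act) : pred S := fun s' => 0 < P s a s'.

Definition strategy (sigma : {ffun S -> Act}) : bool :=
  [forall s, enabled s (sigma s)].

(* Finite path p_0 ... p_n (n transitions) that starts in s and visits T
   for the first time at its last state p_n. *)
Definition first_hit (s : S) (n : nat) (p : {ffun 'I_n.+1 -> S}) : bool :=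
  [&& p ord0 == s, p ord_max \in T &
      [forall i : 'I_n, p (widen_ord (leqnSn n) i) \notin T]].

Definition path_prob (sigma : {ffun S -> Act}) (n : nat)
  (p : {ffun 'I_n.+1 -> S}) : R :=
  \prod_(i < n) P (p (widen_ord (leqnSn n) i)) (sigma (p (widen_ord (leqnSn n) i)))
                  (p (lift ord0 i)).

Definition path_rew (n : nat) (p : {ffun 'I_n.+1 -> S}) : R :=
  \sum_(i < n) rew (p (widen_ord (leqnSn n) i)).

Local Open Scope ereal_scope.

(* probability of eventually visiting T from s under sigma
   (sum over the disjoint cylinders of first-hitting paths) *)
Definition reach_prob (sigma : {ffun S -> Act}) (s : S) : \bar R :=
  \sum_(n <oo) (\sum_(p : {ffun 'I_n.+1 -> S} | first_hit s p) (path_prob sigma p))%R%:E.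

(* E^sigma_s(<> T): expectation of the accumulated reward, which is +oo on
   paths never visiting T; hence +oo if T is reached with probability < 1,
   and otherwise the sum over first-hitting paths of probability * reward. *)
Definition exp_rew (sigma : {ffun S -> Act}) (s : S) : \bar R :=
  if reach_prob sigma s < 1 then +oo
  else \sum_(n <oo)
        (\sum_(p : {ffun 'I_n.+1 -> S} | first_hit s p)
            (path_prob sigma p * path_rew p))%R%:E.

Definition exp_rew_min (s : S) : \bar R :=
  \big[mine/+oo]_(sigma : {ffun S -> Act} | strategy sigma) exp_rew sigma s.

Definition post_sum (x : S -> \bar R) (s : S) (a : Act) : \bar R :=
  \sum_(s' | post s a s') (P s a s')%:E * x s'.

Definition Emin (x : S -> \bar R) (s : S) : \bar R :=
  if s \in T then 0
  else (rew s)%:E + \big[mine/+oo]_(a | enabled s a) post_sum x s a.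

Definition dec_act (x : S -> \bar R) (s : S) : pred Act :=
  fun a => enabled s a && ((rew s)%:E + post_sum x s a <= x s).

End MDP.

(* N_oo = N u {oo}: Some n is n, None is oo *)
Definition natinf := option nat.
Definition ninf_le (a b : natinf) : bool :=
  match a, b with
  | _, None => true
  | None, Some _ => false
  | Some m, Some n => (m <= n)%N
  end.
Definition ninf_min (a b : natinf) : natinf :=
  match a, b with
  | None, _ => b
  | _, None => a
  | Some m, Some n => Some (minn m n)
  end.
Definition ninf_succ (a : natinf) : natinf :=
  match a with None => None | Some n => Some n.+1 end.

Definition Dmin (R : realType) (S Act : finType) (P : S -> Act -> S -> R)
  (T : {set S}) (rew : S -> R) (x : S -> \bar R) (r : S -> natinf) (s : S)
  : natinf :=
  if s \in T then Some 0%N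
  else ninf_succ (\big[ninf_min/None]_(a | dec_act P rew x s a)
                   \big[ninf_min/None]_(s' | post P s a s') r s').

From mathcomp Require Import all_boot all_order all_algebra.
From mathcomp Require Import all_classical all_reals all_analysis.
From mathcomp Require Import lra.
Import Order.TTheory GRing.Theory Num.Theory.
Set Implicit Arguments. Unset Strict Implicit. Unset Printing Implicit Defensive.
Local Open Scope ring_scope.

(** Where [x] is finite, [r] is finite too, so [D^{min,rew}_x(r) <= r] yields
outside [T] an [x]-decreasing action with a successor of strictly smaller rank;
fixing such actions, and arbitrary enabled ones elsewhere, gives a memoryless
strategy. Decreasing actions never leave the set [F] where [x] is finite and
make [x] superharmonic on it, so the reward collected on the paths that hit [T]
within [N] steps is at most [x], for every [N]. The ranks show that from any
state of [F] the chain hits [T] within [max r + 1] steps with probability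
bounded away from zero, so it misses [T] for [k * (max r + 1)] steps with
probability at most [c ^ k] for some [c < 1]: [T] is reached almost surely and
the expected reward is the limit of these bounded partial sums. *)

Section FirstHitPaths.
Variables (R : realType) (S Act : finType) (P : S -> Act -> S -> R).
Variables (T : {set S}) (rew : S -> R) (sigma : {ffun S -> Act}).

Definition path_cons n (s0 : S) (q : {ffun 'I_n.+1 -> S}) : {ffun 'I_n.+2 -> S} :=
  [ffun i => if unlift ord0 i is Some j then q j else s0].

Lemma path_cons0 n s0 (q : {ffun 'I_n.+1 -> S}) : path_cons s0 q ord0 = s0.
Proof. by rewrite ffunE unlift_none. Qed.

Lemma path_consS n s0 (q : {ffun 'I_n.+1 -> S}) j : path_cons s0 q (lift ord0 j) = q j.
Proof. by rewrite ffunE liftK. Qed.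

Lemma widen_ord_ord0 n : widen_ord (leqnSn n.+1) (ord0 : 'I_n.+1) = ord0.
Proof. exact: val_inj. Qed.

Lemma widen_ord_lift0 n (i : 'I_n) :
  widen_ord (leqnSn n.+1) (lift ord0 i) = lift ord0 (widen_ord (leqnSn n) i).
Proof. exact: val_inj. Qed.

Lemma ord_max_lift0 n : (ord_max : 'I_n.+2) = lift ord0 (ord_max : 'I_n.+1).
Proof. exact: val_inj. Qed.

Lemma sum_path_cons n (G : {ffun 'I_n.+2 -> S} -> R) :
  \sum_p G p = \sum_s0 \sum_(q : {ffun 'I_n.+1 -> S}) G (path_cons s0 q).
Proof.
rewrite pair_big /= (reindex (fun u : S * _ => path_cons u.1 u.2)) //.
exists (fun p : {ffun 'I_n.+2 -> S} => (p ord0, [ffun j => p (lift ord0 j)])).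
  move=> [s0 q] _ /=; rewrite path_cons0; congr pair.
  by apply/ffunP => j; rewrite ffunE path_consS.
move=> p _; apply/ffunP => i; rewrite ffunE.
by case: unliftP => [j ->|->]; rewrite ?ffunE.
Qed.

Lemma first_hit_cons n s s0 (q : {ffun 'I_n.+1 -> S}) :
  first_hit T s (path_cons s0 q) =
  [&& s0 == s, s0 \notin T & first_hit T (q ord0) q].
Proof.
rewrite /first_hit path_cons0 ord_max_lift0 path_consS eqxx /=.
case: (s0 == s) => //=; case: (q ord_max \in T) => /=; last by rewrite !andbF.
apply/forallP/andP => [avoidT|[s0T /forallP avoidT] i].
  split; first by have := avoidT ord0; rewrite widen_ord_ord0 path_cons0.
  by apply/forallP => j; have := avoidT (lift ord0 j); rewrite widen_ord_lift0 path_consS.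
case: (unliftP ord0 i) => [j ->|->]; last by rewrite widen_ord_ord0 path_cons0.
by rewrite widen_ord_lift0 path_consS.
Qed.

Lemma path_prob_cons n s0 (q : {ffun 'I_n.+1 -> S}) :
  path_prob P sigma (path_cons s0 q) = P s0 (sigma s0) (q ord0) * path_prob P sigma q.
Proof.
rewrite /path_prob big_ord_recl widen_ord_ord0 path_cons0 path_consS; congr (_ * _).
by apply: eq_bigr => i _; rewrite widen_ord_lift0 !path_consS.
Qed.

Lemma path_rew_cons n s0 (q : {ffun 'I_n.+1 -> S}) :
  path_rew rew (path_cons s0 q) = rew s0 + path_rew rew q.
Proof.
rewrite /path_rew big_ord_recl widen_ord_ord0 path_cons0; congr (_ + _).
by apply: eq_bigr => i _; rewrite widen_ord_lift0 !path_consS.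
Qed.

Lemma sum_first_hit_from_start n (G : S -> {ffun 'I_n.+1 -> S} -> R) :
  \sum_(q : {ffun 'I_n.+1 -> S} | first_hit T (q ord0) q) G (q ord0) q =
  \sum_s' \sum_(q : {ffun 'I_n.+1 -> S} | first_hit T s' q) G s' q.
Proof.
rewrite big_mkcond (eq_bigr _ (fun s' _ => big_mkcond _ _)) /= exchange_big /=.
apply: eq_bigr => q _; rewrite (bigD1 (q ord0)) //= big1 ?addr0 // => s' s'_neq.
case hit: (first_hit T s' q) => //.
by move: hit => /and3P[/eqP q0 _ _]; rewrite q0 eqxx in s'_neq.
Qed.

Definition hit_prob n s :=
  \sum_(p : {ffun 'I_n.+1 -> S} | first_hit T s p) path_prob P sigma p.

Definition hit_rew n s :=
  \sum_(p : {ffun 'I_n.+1 -> S} | first_hit T s p) path_prob P sigma p * path_rew rew p.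

Lemma hit_prob0 s : hit_prob 0 s = (s \in T)%:R.
Proof.
have first_hit0 (p : {ffun 'I_1 -> S}) :
    first_hit T s p = (p == [ffun => s]) && (s \in T).
  rewrite /first_hit (_ : ord_max = ord0); last exact: val_inj.
  rewrite (_ : [forall i : 'I_0, _] = true) ?andbT; last by apply/forallP => -[].
  have -> : (p == [ffun => s]) = (p ord0 == s).
    apply/eqP/eqP => [->|p0]; first by rewrite ffunE.
    by apply/ffunP => i; rewrite ffunE (ord1 i).
  by case: eqP => // ->.
rewrite /hit_prob (eq_bigl _ _ first_hit0).
case: (s \in T); last by rewrite big1 // => p; rewrite andbF.
by rewrite (big_pred1 [ffun => s]) /path_prob ?big_ord0 // => p; rewrite andbT.
Qed.

Lemma hit_probS n s : hit_prob n.+1 s =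
  if s \in T then 0 else \sum_s' P s (sigma s) s' * hit_prob n s'.
Proof.
rewrite /hit_prob big_mkcond sum_path_cons (bigD1 s) //= [X in _ + X]big1 ?addr0;
  last by move=> s0 s0_neq; apply: big1 => q _; rewrite first_hit_cons (negbTE s0_neq).
under eq_bigr do rewrite first_hit_cons eqxx /=.
case: (s \in T) => /=; first by rewrite big1.
rewrite -big_mkcond /=; under eq_bigr do rewrite path_prob_cons.
rewrite (sum_first_hit_from_start (fun s' q => P s (sigma s) s' * path_prob P sigma q)).
by apply: eq_bigr => s' _; rewrite big_distrr.
Qed.

Lemma hit_rew0 s : hit_rew 0 s = 0.
Proof. by apply: big1 => p _; rewrite /path_rew big_ord0 mulr0. Qed.

Lemma hit_rewS n s : hit_rew n.+1 s =
  if s \in T then 0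
  else \sum_s' P s (sigma s) s' * (rew s * hit_prob n s' + hit_rew n s').
Proof.
rewrite /hit_rew big_mkcond sum_path_cons (bigD1 s) //= [X in _ + X]big1 ?addr0;
  last by move=> s0 s0_neq; apply: big1 => q _; rewrite first_hit_cons (negbTE s0_neq).
under eq_bigr do rewrite first_hit_cons eqxx /=.
case: (s \in T) => /=; first by rewrite big1.
rewrite -big_mkcond /=; under eq_bigr do rewrite path_prob_cons path_rew_cons.
rewrite (sum_first_hit_from_start
  (fun s' q => P s (sigma s) s' * path_prob P sigma q * (rew s + path_rew rew q))).
apply: eq_bigr => s' _; rewrite /hit_prob /hit_rew mulrDr mulr_sumr !big_distrr -big_split /=.
by apply: eq_bigr => q _; rewrite mulrDr -!mulrA [rew s * _]mulrC.
Qed.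

End FirstHitPaths.

Section SuperharmonicBound.
Variables (R : realType) (S Act : finType) (P : S -> Act -> S -> R).
Variables (T : {set S}) (rew : S -> R) (sigma : {ffun S -> Act}).
Variables (F : pred S) (xf : S -> R) (rk : S -> nat).
Hypothesis P_ge0 : forall s a s', 0 <= P s a s'.
Hypothesis sigma_stoch : forall s, \sum_s' P s (sigma s) s' = 1.
Hypothesis rew_ge0 : forall s, 0 <= rew s.
Hypothesis xf_ge0 : forall s, 0 <= xf s.
Hypothesis F_closed : forall s s', F s -> s \notin T -> 0 < P s (sigma s) s' -> F s'.
Hypothesis xf_superharmonic : forall s, F s -> s \notin T ->
  rew s + \sum_s' P s (sigma s) s' * xf s' <= xf s.
Hypothesis rk_progress : forall s, F s -> s \notin T ->
  exists2 s', 0 < P s (sigma s) s' & (rk s' < rk s)%N.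

Let h := hit_prob P T sigma.
Let g := hit_rew P T rew sigma.

Lemma hit_prob_ge0 n s : 0 <= h n s.
Proof. by apply: sumr_ge0 => p _; apply: prodr_ge0. Qed.

Lemma hit_rew_ge0 n s : 0 <= g n s.
Proof. by apply: sumr_ge0 => p _; apply: mulr_ge0; [apply: prodr_ge0 | apply: sumr_ge0]. Qed.

Lemma sum_hit_prob_le1 N s : \sum_(0 <= n < N) h n s <= 1.
Proof.
elim: N s => [|N IH] s; first by rewrite big_geq.
rewrite big_nat_recl // /h hit_prob0; under eq_bigr do rewrite hit_probS.
case: (s \in T) => /=; first by rewrite big1 ?addr0.
rewrite add0r exchange_big /= -(sigma_stoch s); apply: ler_sum => s' _.
by rewrite -mulr_sumr ler_piMr.
Qed.

Lemma sum_hit_rew_le N s : F s -> \sum_(0 <= n < N) g n s <= xf s.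
Proof.
elim: N s => [|N IH] s Fs; first by rewrite big_geq.
rewrite big_nat_recl // /g hit_rew0 add0r; under eq_bigr do rewrite hit_rewS.
case sT: (s \in T) => /=; first by rewrite big1.
rewrite exchange_big /=; apply: le_trans (xf_superharmonic Fs (negbT sT)).
rewrite -[X in _ <= X + _]mulr1 -(sigma_stoch s) mulr_sumr -big_split /=.
apply: ler_sum => s' _; rewrite -mulr_sumr big_split /= -mulr_sumr.
have [->|P_neq0] := eqVneq (P s (sigma s) s') 0; first by rewrite !(mul0r, mulr0, addr0).
have P_gt0 : 0 < P s (sigma s) s' by rewrite lt0r P_neq0 P_ge0.
rewrite [rew s * P _ _ _]mulrC -mulrDr ler_wpM2l // lerD ?ler_piMr ?sum_hit_prob_le1 //.
exact: IH (F_closed Fs (negbT sT) P_gt0).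
Qed.

(** The probability that none of the states [p_0, ..., p_(N-1)] is in [T]. *)
Definition miss_prob N s := 1 - \sum_(0 <= n < N) h n s.

Lemma miss_prob0 s : miss_prob 0 s = 1.
Proof. by rewrite /miss_prob big_geq // subr0. Qed.

Lemma miss_prob_ge0 N s : 0 <= miss_prob N s.
Proof. by rewrite subr_ge0 sum_hit_prob_le1. Qed.

Lemma miss_prob_le1 N s : miss_prob N s <= 1.
Proof. by rewrite gerBl; apply: sumr_ge0 => n _; apply: hit_prob_ge0. Qed.

Lemma miss_probS N s :
  miss_prob N.+1 s = if s \in T then 0 else \sum_s' P s (sigma s) s' * miss_prob N s'.
Proof.
rewrite /miss_prob big_nat_recl // /h hit_prob0; under eq_bigr do rewrite hit_probS.
case: (s \in T) => /=; first by rewrite big1 ?addr0 ?subrr.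
rewrite add0r exchange_big /= -[in LHS](sigma_stoch s) -sumrB.
by apply: eq_bigr => s' _; rewrite mulrBr mulr1 mulr_sumr.
Qed.

Lemma miss_prob_lt1 N s : F s -> (rk s < N)%N -> miss_prob N s < 1.
Proof.
elim: N s => [//|N IH] s Fs rk_lt.
rewrite miss_probS; case sT: (s \in T) => /=; first exact: ltr01.
have [s' P_gt0 rk_s'_lt] := rk_progress Fs (negbT sT).
have miss_lt1 : miss_prob N s' < 1.
  by apply: IH (F_closed Fs (negbT sT) P_gt0) _; apply: leq_trans rk_s'_lt _.
rewrite -subr_gt0 -[X in X - _](sigma_stoch s) -sumrB (bigD1 s') //=.
have rest_ge0 : 0 <= \sum_(i | i != s') (P s (sigma s) i - P s (sigma s) i * miss_prob N i).
  by apply: sumr_ge0 => i _; rewrite subr_ge0 ler_piMr ?miss_prob_le1.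
have : 0 < P s (sigma s) s' - P s (sigma s) s' * miss_prob N s' by nra.
lra.
Qed.

Let horizon := (\max_s rk s).+1.
Let miss_bound := \big[Order.max/0]_(s | F s) miss_prob horizon s.

Lemma miss_bound_ge0 : 0 <= miss_bound.
Proof. exact: bigmax_ge_id. Qed.

Lemma miss_bound_lt1 : miss_bound < 1.
Proof.
apply: bigmax_lt => [|s Fs]; first exact: ltr01.
by apply: miss_prob_lt1 Fs _; rewrite ltnS leq_bigmax.
Qed.

(** Markov property: to miss [T] for [N + horizon] steps, the chain first
misses it for [N] steps and then, from some state of [F], for [horizon] more. *)
Lemma miss_prob_add_horizon N s :
  F s -> miss_prob (N + horizon) s <= miss_prob N s * miss_bound.
Proof.
elim: N s => [|N IH] s Fs.
  by rewrite add0n miss_prob0 mul1r; apply: le_bigmax_cond.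
rewrite addSn !miss_probS; case sT: (s \in T) => /=; first by rewrite mul0r.
rewrite mulr_suml; apply: ler_sum => s' _.
have [->|P_neq0] := eqVneq (P s (sigma s) s') 0; first by rewrite !mul0r.
have P_gt0 : 0 < P s (sigma s) s' by rewrite lt0r P_neq0 P_ge0.
by rewrite -mulrA ler_wpM2l // IH // (F_closed Fs (negbT sT) P_gt0).
Qed.

Lemma miss_prob_geometric k s : F s -> miss_prob (k * horizon) s <= miss_bound ^+ k.
Proof.
elim: k s => [|k IH] s Fs; first by rewrite mul0n miss_prob0 expr0.
rewrite mulSnr; apply: le_trans (miss_prob_add_horizon _ Fs) _.
by rewrite exprSr ler_wpM2r ?miss_bound_ge0 ?IH.
Qed.

Lemma sum_hit_prob_near1 s e : F s -> 0 < e ->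
  exists N, 1 - e <= \sum_(0 <= n < N) h n s.
Proof.
move=> Fs e_gt0.
have bound_lt1 : `|miss_bound| < 1 by rewrite ger0_norm ?miss_bound_ge0 ?miss_bound_lt1.
have [k _ /(_ k (leqnn k)) /= pow_lt] := cvgr0_norm_lt _ (cvg_expr bound_lt1) _ e_gt0.
exists (k * horizon)%N.
have := miss_prob_geometric k Fs; have := ler_norm (miss_bound ^+ k).
rewrite /miss_prob; lra.
Qed.

Lemma reach_prob_ge1 s : F s -> (1 <= reach_prob P T sigma s)%E.
Proof.
move=> Fs; apply/lee_addgt0Pr => e e_gt0.
have [N near1] := sum_hit_prob_near1 Fs e_gt0.
apply: (@le_trans _ _ ((\sum_(0 <= n < N) h n s) + e)%:E); first by rewrite lee_fin; lra.
rewrite EFinD leeD2r // -sumEFin.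
by apply: (nneseries_lim_ge N) => n _ _; rewrite lee_fin hit_prob_ge0.
Qed.

Lemma exp_rew_le s : F s -> (exp_rew P T rew sigma s <= (xf s)%:E)%E.
Proof.
move=> Fs; rewrite /exp_rew ltNge reach_prob_ge1 //=.
apply: lime_le; first by apply: is_cvg_nneseries => n _ _; rewrite lee_fin hit_rew_ge0.
by apply: nearW => N; rewrite sumEFin lee_fin sum_hit_rew_le.
Qed.

End SuperharmonicBound.

Lemma big_ninf_min_Some (I : finType) (Q : pred I) (f : I -> natinf) j :
  \big[ninf_min/None]_(i | Q i) f i = Some j -> exists2 i, Q i & f i = Some j.
Proof.
have : \big[ninf_min/None]_(i | Q i) f i = None \/
    exists2 i, Q i & f i = \big[ninf_min/None]_(i | Q i) f i.
  elim/big_ind: _ => [|u v u_cases v_cases|i Qi]; [by left | | by right; exists i].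
  case: u_cases => [->|[i Qi <-]]; first exact: v_cases.
  case: v_cases => [->|[i' Qi' <-]]; first by right; exists i => //; case: (f i).
  case fi: (f i) => [m|]; case fi': (f i') => [m'|] /=;
    [ | by right; exists i; rewrite ?fi | by right; exists i'; rewrite ?fi' | by left].
  by case: (leqP m m') => _; right; [exists i | exists i']; rewrite ?fi ?fi'.
by move=> [-> // | [i Qi fi_eq] big_eq]; exists i; rewrite // fi_eq.
Qed.

Section DecreasingActions.
Variables (R : realType) (S Act : finType) (P : S -> Act -> S -> R).
Variables (T : {set S}) (rew : S -> R) (x : S -> \bar R) (r : S -> natinf).
Hypothesis P_ge0 : forall s a s', 0 <= P s a s'.
Hypothesis x_ge0 : forall s, (0 <= x s)%E.

Lemma dec_act_post_finite s a s' : (x s < +oo)%E ->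
  dec_act P rew x s a -> post P s a s' -> (x s' < +oo)%E.
Proof.
move=> xs_fin /andP[_ dec] P_gt0; rewrite ltey; apply: contraTneq dec => xs'_inf.
rewrite /post_sum (bigD1 s') //= xs'_inf gt0_muley ?lte_fin // addye; last first.
  by rewrite gt_eqF // (lt_le_trans ltNy0) // sume_ge0 // => i _; rewrite mule_ge0 ?lee_fin.
by rewrite addey // leye_eq -ltey.
Qed.

Lemma dec_act_fine s a : (x s < +oo)%E -> dec_act P rew x s a ->
  rew s + \sum_s' P s a s' * fine (x s') <= fine (x s).
Proof.
move=> xs_fin dec_a; have /andP[_] := dec_a.
have fineK_fin s' : (x s' < +oo)%E -> x s' = (fine (x s'))%:E.
  by move=> xs'_fin; rewrite fineK // ge0_fin_numE.
have sum_post : \sum_s' P s a s' * fine (x s') =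
    \sum_(s' | post P s a s') P s a s' * fine (x s').
  rewrite (bigID (post P s a)) /= [X in _ + X]big1 ?addr0 // => s' not_post.
  suff -> : P s a s' = 0 by rewrite mul0r.
  by apply/eqP; rewrite eq_le P_ge0 andbT leNgt; exact: not_post.
rewrite sum_post {1}(fineK_fin s) // /post_sum.
under eq_bigr => s' post_s' do
  rewrite (fineK_fin s') ?(dec_act_post_finite xs_fin dec_a) // -EFinM.
by rewrite sumEFin -EFinD lee_fin.
Qed.

Lemma Dmin_le_progress s k : s \notin T ->
  ninf_le (Dmin P T rew x r s) (r s) -> r s = Some k ->
  exists2 a, dec_act P rew x s a & exists2 s', post P s a s' & (odflt 0 (r s') < k)%N.
Proof.
rewrite /Dmin => /negbTE -> + r_s; rewrite r_s.
case D_s: (\big[ninf_min/None]_(a | dec_act P rew x s a) _) => [j|] //= j_lt.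
have [a dec_a /big_ninf_min_Some[s' post_s' r_s']] := big_ninf_min_Some D_s.
by exists a => //; exists s'; rewrite // r_s'.
Qed.

Lemma exists_decreasing_strategy :
  (forall s, exists a, enabled P s a) ->
  (forall s, ninf_le (Dmin P T rew x r s) (r s)) ->
  (forall s, (x s < +oo)%E -> r s <> None) ->
  exists2 sigma : {ffun S -> Act}, strategy P sigma &
    forall s, (x s < +oo)%E -> s \notin T ->
      dec_act P rew x s (sigma s) /\
      exists2 s', post P s (sigma s) s' & (odflt 0 (r s') < odflt 0 (r s))%N.
Proof.
move=> enabled_ex Dmin_le r_fin.
have good s : exists a, enabled P s a && ((x s < +oo)%E && (s \notin T) ==>
    dec_act P rew x s a && [exists s', post P s a s' && (odflt 0 (r s') < odflt 0 (r s))%N]).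
  have [/andP[xs_fin sT]|_] := boolP ((x s < +oo)%E && (s \notin T)); last first.
    by have [a enabled_a] := enabled_ex s; exists a; rewrite enabled_a.
  case r_s: (r s) (r_fin s xs_fin) => [k|//] _.
  have [a dec_a [s' post_s' rk_lt]] := Dmin_le_progress sT (Dmin_le s) r_s.
  exists a; rewrite (andP dec_a).1 dec_a /=.
  by apply/existsP; exists s'; rewrite post_s'.
exists [ffun s => xchoose (good s)].
  by apply/forallP => s; rewrite ffunE; case/andP: (xchooseP (good s)).
move=> s xs_fin sT; rewrite ffunE.
move: (xchoose (good s)) (xchooseP (good s)) => a /andP[_].
rewrite xs_fin sT => /andP[dec_a /existsP[s' /andP[post_s' rk_lt]]].
by split => //; exists s'.
Qed.

End DecreasingActions.

Theorem proposition9 (R : realType) (S Act : finType)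
  (P : S -> Act -> S -> R) (T : {set S}) (rew : S -> R)
  (x : S -> \bar R) (r : S -> natinf) :
  mdp_wf P ->
  (forall s : S, exists a : Act, enabled P s a) ->
  (forall s : S, 0 <= rew s) ->
  (forall s : S, (0 <= x s)%E) ->
  (forall s : S, ninf_le (Dmin P T rew x r s) (r s)) ->
  (forall s : S, (Emin P T rew x s <= x s)%E) ->
  (forall s : S, (x s < +oo)%E -> r s <> None) ->
  forall s : S, (exp_rew_min P T rew s <= x s)%E.
Proof.
move=> [P_bounds _] enabled_ex rew_ge0 x_ge0 Dmin_le _ r_fin s.
have P_ge0 s0 a s' : 0 <= P s0 a s' by case/andP: (P_bounds s0 a s').
have [-> | xs_fin] := eqVneq (x s) +oo%E; first exact: leey.
have [sigma sigma_strategy sigma_dec] := exists_decreasing_strategy enabled_ex Dmin_le r_fin.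
apply: le_trans (bigmin_le_cond _ _ sigma_strategy) _.
pose F s0 := (x s0 < +oo)%E.
have sigma_stoch s0 : \sum_s' P s0 (sigma s0) s' = 1.
  by apply/eqP; move/forallP: sigma_strategy => /(_ s0).
have xf_ge0 s0 : 0 <= fine (x s0) by apply: fine_ge0.
have F_closed s0 s' : F s0 -> s0 \notin T -> 0 < P s0 (sigma s0) s' -> F s'.
  by move=> Fs0 s0T; exact: (dec_act_post_finite P_ge0 x_ge0 Fs0 (sigma_dec s0 Fs0 s0T).1).
have xf_superharmonic s0 : F s0 -> s0 \notin T ->
    rew s0 + \sum_s' P s0 (sigma s0) s' * fine (x s') <= fine (x s0).
  by move=> Fs0 s0T; exact: (dec_act_fine P_ge0 x_ge0 Fs0 (sigma_dec s0 Fs0 s0T).1).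
have rk_progress s0 : F s0 -> s0 \notin T ->
    exists2 s', 0 < P s0 (sigma s0) s' & (odflt 0 (r s') < odflt 0 (r s0))%N.
  by move=> Fs0 s0T; have [_ [s' ? ?]] := sigma_dec s0 Fs0 s0T; exists s'.
have Fs : F s by rewrite /F ltey.
rewrite -(@fineK _ (x s)) ?ge0_fin_numE //.
exact: (exp_rew_le P_ge0 sigma_stoch rew_ge0 xf_ge0 F_closed xf_superharmonic rk_progress Fs).
Qed.
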